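(* $20,21,22,23,24,25\notin\operatorname{Spec}(32_{65})$; that is, $\{20,21,22,23,24,25\}\cap\operatorname{Spec}(32_{65})=\emptyset$.
   Context: $32_{65}$ is the finite integral symmetric relation algebra with atoms $1'$, $a$, $b$, $c$, all symmetric, in which a diversity cycle $xyz$ (with $x,y,z\in\{a,b,c\}$) is mandatory (i.e. $x;y\ge z$) if it involves $a$ and forbidden (i.e. $x;y\cdot z=0$) otherwise. A representation over a set $U$ is an embedding into the full relation algebra on $U\times U$. $\operatorname{Spec}(A)$ is the set of cardinals $\alpha\le\omega$ such that $A$ has a representation over a set of cardinality $\alpha$. *)

From HB Require Import structures.
From mathcomp Require Import all_boot.

Set Implicit Arguments.
Unset Strict Implicit.
Unset Printing Implicit Defensive.

(* Atoms of 32_65: the identity atom 1' (called [Id]) and diversity atoms a b c. *)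
Inductive atom := Id | At_a | At_b | At_c.

Definition atom_to_ord (x : atom) : 'I_4 :=
  match x with Id => inord 0 | At_a => inord 1 | At_b => inord 2 | At_c => inord 3 end.
Definition ord_to_atom (i : 'I_4) : atom :=
  match val i with 0 => Id | 1 => At_a | 2 => At_b | _ => At_c end.
Lemma atom_ordK : cancel atom_to_ord ord_to_atom.
Proof. by case; rewrite /ord_to_atom /= inordK. Qed.

HB.instance Definition _ := Equality.copy atom (can_type atom_ordK).
HB.instance Definition _ := Finite.copy atom (can_type atom_ordK).

Definition conv_atom (x : atom) : atom := x.

(* [le_comp x y z] holds iff z <= x ; y in 32_65.
   Identity cycles: 1';y = y, x;1' = x, and x;y >= 1' iff y = converse x = x.
   Diversity cycles xyz are mandatory iff they involve a, forbidden otherwise. *)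
Definition le_comp (x y z : atom) : bool :=
  if x == Id then z == y
  else if y == Id then z == x
  else if z == Id then x == y
  else [|| x == At_a, y == At_a | z == At_a].

Definition RA := {set atom}.
Definition ra_comp (X Y : RA) : RA :=
  [set z | [exists x in X, exists y in Y, le_comp x y z]].
Definition ra_conv (X : RA) : RA := [set conv_atom x | x in X].
Definition ra_id : RA := [set Id].

Definition rel_comp (U : finType) (R S : {set U * U}) : {set U * U} :=
  [set p | [exists w, ((p.1, w) \in R) && ((w, p.2) \in S)]].
Definition rel_conv (U : finType) (R : {set U * U}) : {set U * U} :=
  [set p | (p.2, p.1) \in R].
Definition rel_id (U : finType) : {set U * U} := [set p | p.1 == p.2].

Definition representation (U : finType) (h : RA -> {set U * U}) : Prop :=
  (forall X Y, h (X :|: Y) = h X :|: h Y) /\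
  (forall X, h (~: X) = ~: h X) /\
  (h set0 = set0 /\ h setT = setT) /\
  (forall X Y, h (ra_comp X Y) = rel_comp (h X) (h Y)) /\
  (forall X, h (ra_conv X) = rel_conv (h X)) /\
  h ra_id = rel_id U /\
  injective h.

Definition in_Spec (n : nat) : Prop :=
  exists (U : finType) (h : RA -> {set U * U}), #|U| = n /\ representation h.

From mathcomp Require Import all_boot zify.

(* In a representation of 32_65 every pair (u, w) of points lies in exactly
   one atom [atom_of u w]. Call u and w adjacent when this atom is b or c, so
   that distinct non-adjacent points are exactly the pairs in a. Every cycle
   avoiding a is forbidden, so this graph is triangle-free; every cycle
   involving a is mandatory, so two points related by a have a common
   neighbour for each of the four colourings of a path through it, hence at
   least four common neighbours, and the cycles aba, aab, aac, aa1' provide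
   the remaining properties collected in [graph_32_65].
   In such a graph every vertex has degree at least 8. Counting the paths of
   length two from a vertex v of minimum degree d to its non-neighbours gives
     d (d - 1) <= sum_(y not adjacent to v) |N v :&: N y| <= (|U| - 1 - d) (d - 4),
   which for |U| <= 25 forces d = 8 or d = 9. If d = 8, every non-neighbour
   y of v has smaller degree than the neighbours of v not adjacent to y,
   which forces some neighbour of v to have degree at least 10 and the
   left-hand side up to 65 > 64. If d = 9, at least four non-neighbours of v
   have only four common neighbours with v, which brings the right-hand side
   down to 71 < 72. *)

Set Implicit Arguments.
Unset Strict Implicit.
Unset Printing Implicit Defensive.

Section Neighbourhoods.

Variables (T : finType) (adj : rel T).

Definition nbrs (v : T) : {set T} := [set w | adj v w].
Definition nonnbrs (v : T) : {set T} := ~: (v |: nbrs v).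

Lemma in_nbrs v w : (w \in nbrs v) = adj v w.
Proof. by rewrite inE. Qed.

Lemma in_nonnbrs v w : (w \in nonnbrs v) = (w != v) && ~~ adj v w.
Proof. by rewrite !inE negb_or. Qed.

Lemma cardsI_sum (A B : {set T}) : #|A :&: B| = \sum_(x in A) (x \in B).
Proof.
rewrite -sum1_card big_mkcond [RHS]big_mkcond /=.
by apply: eq_bigr => x _; rewrite inE; case: (x \in A); case: (x \in B).
Qed.

Lemma sum_cardsI_nbrs (B C : {set T}) : symmetric adj ->
  \sum_(x in B) #|C :&: nbrs x| = \sum_(y in C) #|B :&: nbrs y|.
Proof.
move=> adj_sym; under eq_bigr => x _ do rewrite cardsI_sum.
rewrite exchange_big; apply: eq_bigr => y _.
by rewrite cardsI_sum; apply: eq_bigr => x _; rewrite !in_nbrs adj_sym.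
Qed.

End Neighbourhoods.

Record graph_32_65 (T : finType) (adj : rel T) : Prop := {
  adj_sym : symmetric adj;
  adj_irr : irreflexive adj;
  triangle_free : forall u v w, adj u v -> adj v w -> ~~ adj u w;
  common_nbrs_ge4 : forall u w, w \in nonnbrs adj u ->
    4 <= #|nbrs adj u :&: nbrs adj w|;
  private_nbr : forall u w, w \in nonnbrs adj u ->
    exists s, s \in nbrs adj w :\: nbrs adj u;
  edge_common_nonnbr : forall u w, adj u w ->
    exists s, s \in nonnbrs adj u :&: nonnbrs adj w;
  nonnbr_exists : forall u, exists s, s \in nonnbrs adj u }.

Section Graph32_65.

Variables (T : finType) (adj : rel T).
Hypothesis G : graph_32_65 adj.

Local Notation N := (nbrs adj).
Local Notation A := (nonnbrs adj).

Lemma nonnbrsC u w : (w \in A u) = (u \in A w).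
Proof. by rewrite !in_nonnbrs eq_sym (adj_sym G). Qed.

Lemma nbrsI_sub_nbrsD u w t : adj w t -> N u :&: N t \subset N u :\: N w.
Proof.
move=> wt; apply/subsetP => s; rewrite !inE => /andP [us ts].
by rewrite us andbT (triangle_free G wt) // (adj_sym G).
Qed.

Lemma nbrsD_sub_nonnbrs u w : w \in A u -> N w :\: N u \subset A u.
Proof.
rewrite in_nonnbrs => /andP [_ nuw]; apply/subsetP => t.
rewrite !inE negb_or => /andP [-> wt]; rewrite andbT.
by apply: contraNneq nuw => tu; rewrite (adj_sym G) -tu.
Qed.

Lemma card_nbrsD_ge4 u w : w \in A u -> 4 <= #|N u :\: N w|.
Proof.
move=> wAu; have [s sD] := private_nbr G wAu.
have sAu : s \in A u := subsetP (nbrsD_sub_nonnbrs wAu) s sD.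
move: sD; rewrite !inE => /andP [_ ws].
exact: leq_trans (common_nbrs_ge4 G sAu) (subset_leq_card (nbrsI_sub_nbrsD u ws)).
Qed.

Lemma card_nbrs_ge u w : w \in A u -> #|N u :&: N w| + 4 <= #|N u|.
Proof. by move=> wAu; rewrite -(cardsID (N w) (N u)) leq_add2l card_nbrsD_ge4. Qed.

Lemma card_nbrs_ge8 u : 8 <= #|N u|.
Proof.
have [w wAu] := nonnbr_exists G u.
by have := common_nbrs_ge4 G wAu; have := card_nbrs_ge wAu; lia.
Qed.

Lemma card_vertices v : #|T| = #|A v| + 1 + #|N v|.
Proof.
rewrite cardsCs setCK cardsU1 in_nbrs (adj_irr G) /=.
by have := max_card (v |: N v); rewrite cardsU1 in_nbrs (adj_irr G) /=; lia.
Qed.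

Lemma sum_nbrs_pred_deg v :
  \sum_(x in N v) (#|N x| - 1) = \sum_(y in A v) #|N v :&: N y|.
Proof.
rewrite -(sum_cardsI_nbrs _ _ (adj_sym G)); apply: eq_bigr => x vx.
have -> : A v :&: N x = N x :\ v.
  apply/setP => y; rewrite !inE negb_or; case xy: (adj x y); rewrite ?andbF //=.
  by rewrite (triangle_free G _ xy) ?andbT // -in_nbrs.
by rewrite (cardsD1 v (N x)) in_nbrs (adj_sym G) -in_nbrs vx addKn.
Qed.

Lemma sum_common_nbrs_le v :
  \sum_(y in A v) #|N v :&: N y| <= #|A v| * (#|N v| - 4).
Proof.
rewrite -sum_nat_const; apply: leq_sum => y yAv.
by have := card_nbrs_ge yAv; lia.
Qed.

Lemma deg8_nonnbr_cards v y : #|N v| = 8 -> y \in A v ->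
  #|N v :&: N y| = 4 /\ #|N v :\: N y| = 4.
Proof.
move=> dv yAv; have := common_nbrs_ge4 G yAv; have := card_nbrsD_ge4 yAv.
by have := cardsID (N y) (N v); rewrite dv; lia.
Qed.

Lemma deg8_private_adj v y t x : #|N v| = 8 -> y \in A v ->
  t \in N y :\: N v -> x \in N v :\: N y -> adj t x.
Proof.
move=> dv yAv tD xD.
have tAv : t \in A v := subsetP (nbrsD_sub_nonnbrs yAv) t tD.
have /setDP [yt _] := tD; rewrite in_nbrs in yt.
have [_ D4] := deg8_nonnbr_cards dv yAv.
have card_eq : #|N v :&: N t| = #|N v :\: N y|.
  by apply/eqP; rewrite eqn_leq subset_leq_card ?nbrsI_sub_nbrsD // D4 common_nbrs_ge4.
have /(subset_cardP card_eq) eqD := nbrsI_sub_nbrsD v yt.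
by move: (eqD x); rewrite xD !inE (adj_sym G) => /andP [].
Qed.

Lemma deg8_nonnbr_lt v y x : #|N v| = 8 -> y \in A v ->
  x \in N v :\: N y -> #|N y| < #|N x|.
Proof.
move=> dv yAv xD; have [I4 D4] := deg8_nonnbr_cards dv yAv.
have /card_gt0P [x' /setD1P [x'x x'D]] : 0 < #|(N v :\: N y) :\ x|.
  by move: D4; rewrite (cardsD1 x) xD /=; lia.
have /setDP [vx _] := xD; have /setDP [vx' _] := x'D; rewrite !in_nbrs in vx vx'.
have x'Ax : x' \in A x.
  by rewrite in_nonnbrs x'x (triangle_free G _ vx') // (adj_sym G).
have sub : v |: (N y :\: N v) \subset N x :&: N x'.
  apply/subsetP => t /setU1P [-> | tD]; first by rewrite !inE -!(adj_sym G v) vx vx'.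
  rewrite !inE -!(adj_sym G t).
  by rewrite (deg8_private_adj dv yAv tD xD) (deg8_private_adj dv yAv tD x'D).
have vNy : v \notin N y.
  by rewrite in_nbrs (adj_sym G); move: yAv; rewrite in_nonnbrs => /andP [].
move: (subset_leq_card sub); rewrite cardsU1 inE (negbTE vNy) andbF.
have := card_nbrs_ge x'Ax; have := cardsID (N v) (N y); rewrite setIC I4; lia.
Qed.

Lemma deg8_nbr_ge9 v x : #|N v| = 8 -> x \in N v -> 9 <= #|N x|.
Proof.
move=> dv; rewrite in_nbrs => vx; have [s /setIP [sAv sAx]] := edge_common_nonnbr G vx.
have xD : x \in N v :\: N s.
  by move: sAx; rewrite !inE (adj_sym G s) vx andbT negb_or => /andP [].
by have := deg8_nonnbr_lt dv sAv xD; have := card_nbrs_ge8 s; lia.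
Qed.

Lemma deg8_nbr_ge10 v : #|N v| = 8 -> exists2 x, x \in N v & 10 <= #|N x|.
Proof.
move=> dv; apply/exists_inP/contraT; rewrite negb_exists_in => /forall_inP small.
have nonnbr_deg8 z : z \in A v -> #|N z| = 8.
  move=> zAv; have vAz : v \in A z by rewrite -nonnbrsC.
  have [x xD] := private_nbr G vAz.
  have /setDP [vx _] := xD; have := small x vx.
  by have := deg8_nonnbr_lt dv zAv xD; have := card_nbrs_ge8 z; lia.
have [y yAv] := nonnbr_exists G v; have [t tD] := private_nbr G yAv.
have tAv : t \in A v := subsetP (nbrsD_sub_nonnbrs yAv) t tD.
have /setDP [yt _] := tD.
by have := deg8_nbr_ge9 (nonnbr_deg8 y yAv) yt; rewrite nonnbr_deg8.
Qed.

Lemma deg8_sum_pred_deg_ge65 v : #|N v| = 8 -> 65 <= \sum_(x in N v) (#|N x| - 1).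
Proof.
move=> dv; have [x0 x0v x0_ge10] := deg8_nbr_ge10 dv.
apply: (@leq_trans (\sum_(x in N v) (8 + (x == x0)))).
  rewrite big_split sum_nat_const dv (big_setD1 x0) //= eqxx big1 //.
  by move=> x /setD1P [/negbTE ->].
by apply: leq_sum => x xv; have := deg8_nbr_ge9 dv xv; case: eqP => [-> | _]; lia.
Qed.

Lemma deg9_many_small_common v : #|N v| = 9 ->
  4 <= #|[set y in A v | #|N v :&: N y| <= 4]|.
Proof.
move=> dv; set K := [set y in A v | _].
have privK y : y \in A v -> 5 <= #|N v :&: N y| -> N y :\: N v \subset K.
  move=> yAv y5; apply/subsetP => t tD; rewrite inE (subsetP (nbrsD_sub_nonnbrs yAv)) //=.
  have /setDP [yt _] := tD; rewrite in_nbrs in yt.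
  apply: leq_trans (subset_leq_card (nbrsI_sub_nbrsD v yt)) _.
  by have := cardsID (N y) (N v); rewrite dv; lia.
have [y yAv yK] : exists2 y, y \in A v & N y :\: N v \subset K.
  case: (boolP (A v \subset K)) => [AK | /subsetPn [y yAv yK]].
    have [y yAv] := nonnbr_exists G v.
    by exists y => //; apply: subset_trans (nbrsD_sub_nonnbrs yAv) AK.
  by exists y => //; apply: privK; move: yK; rewrite inE yAv /=; lia.
apply: leq_trans (subset_leq_card yK); apply: card_nbrsD_ge4.
by rewrite -nonnbrsC.
Qed.

Lemma deg9_sum_common_le v : #|N v| = 9 ->
  \sum_(y in A v) #|N v :&: N y| + 4 <= 5 * #|A v|.
Proof.
move=> dv; have := deg9_many_small_common dv; set K := [set y in A v | _] => K4.
have AK : A v :&: K = K by apply/setIidPr/subsetP => y; rewrite inE => /andP [].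
rewrite (big_setID K) /= AK.
have le4 : \sum_(y in K) #|N v :&: N y| <= #|K| * 4.
  by rewrite -sum_nat_const; apply: leq_sum => y; rewrite inE => /andP [].
have le5 : \sum_(y in A v :\: K) #|N v :&: N y| <= #|A v :\: K| * 5.
  rewrite -sum_nat_const; apply: leq_sum => y /setDP [yAv _].
  by have := card_nbrs_ge yAv; rewrite dv; lia.
by have := cardsID K (A v); rewrite AK; lia.
Qed.

Lemma graph_32_65_card_ge26 (u0 : T) : 26 <= #|T|.
Proof.
case: (@arg_minnP T u0 xpredT (fun w => #|N w|) isT) => v _ vmin.
have lo : #|N v| * (#|N v| - 1) <= \sum_(x in N v) (#|N x| - 1).
  by rewrite -sum_nat_const; apply: leq_sum => x _; rewrite leq_sub2r ?vmin.
have := card_vertices v; have := sum_nbrs_pred_deg v; have := sum_common_nbrs_le v.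
case: (ltngtP #|N v| 9) => [lt9 | gt9 | d9].
- have d8 : #|N v| = 8 by have := card_nbrs_ge8 v; lia.
  by have := deg8_sum_pred_deg_ge65 d8; rewrite d8; lia.
- by move: lo gt9; nia.
- by have := deg9_sum_common_le d9; rewrite d9; lia.
Qed.

End Graph32_65.

(* Equality on [atom] goes through [inord], which does not compute. *)
Definition atom_code (x : atom) : nat :=
  match x with Id => 0 | At_a => 1 | At_b => 2 | At_c => 3 end.

Lemma eq_atomE (x y : atom) : (x == y) = (atom_code x == atom_code y).
Proof. by apply/eqP/eqP => [-> // |]; case: x; case: y. Qed.

Lemma mem_ra_comp1 x y z : (z \in ra_comp [set x] [set y]) = le_comp x y z.
Proof.
rewrite inE; apply/exists_inP/idP => [[_ /set1P -> /exists_inP [_ /set1P -> //]] | xyz].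
by exists x; rewrite ?set11 //; apply/exists_inP; exists y; rewrite ?set11.
Qed.

Section Representation.

Variables (U : finType) (h : RA -> {set U * U}).
Hypothesis hR : representation h.

(* By [atom_ofP], the default [Id] is never used. *)
Definition atom_of (u w : U) : atom := odflt Id [pick z | (u, w) \in h [set z]].

Lemma rep_subset (X Y : RA) : X \subset Y -> h X \subset h Y.
Proof. by case: hR => hU _ /setUidPr <-; rewrite hU subsetUl. Qed.

Lemma rep_setC (X : RA) p : (p \in h (~: X)) = (p \notin h X).
Proof. by case: hR => _ [hC _]; rewrite hC inE. Qed.

Lemma rep_atom_uniq p x y : p \in h [set x] -> p \in h [set y] -> x = y.
Proof.
move=> px py; apply/eqP; apply: contraTT py => xy.
rewrite -rep_setC; apply: (subsetP (rep_subset _)) px.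
by rewrite sub1set !inE.
Qed.

Lemma rep_atom_cover p : exists z, p \in h [set z].
Proof.
have [hU [_ [[_ hT] _]]] := hR.
have : p \in h [set: atom] by rewrite hT inE.
have -> : [set: atom] = [set Id; At_a; At_b; At_c].
  by apply/setP => -[]; rewrite !inE eqxx ?orbT.
by rewrite !hU !inE -!orbA => /or4P [] pz; eexists; exact: pz.
Qed.

Lemma atom_ofP u w z : ((u, w) \in h [set z]) = (atom_of u w == z).
Proof.
rewrite /atom_of; case: pickP => [z' uwz' | none] /=.
  by apply/idP/eqP => [uwz | <- //]; exact: rep_atom_uniq uwz' uwz.
by have [z' uwz'] := rep_atom_cover (u, w); move: (none z'); rewrite uwz'.
Qed.

Lemma mem_rep u w (X : RA) : ((u, w) \in h X) = (atom_of u w \in X).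
Proof.
have uw1 : (u, w) \in h [set atom_of u w] by rewrite atom_ofP.
case: (boolP (atom_of u w \in X)) => uwX.
  by apply: (subsetP (rep_subset _)) uw1; rewrite sub1set.
apply/negbTE; rewrite -rep_setC; apply: (subsetP (rep_subset _)) uw1.
by rewrite sub1set inE.
Qed.

Lemma atom_of_idE u w : (atom_of u w == Id) = (u == w).
Proof. by case: hR => _ [_ [_ [_ [_ [hId _]]]]]; rewrite -atom_ofP -/ra_id hId inE. Qed.

Lemma atom_of_refl u : atom_of u u = Id.
Proof. by apply/eqP; rewrite atom_of_idE. Qed.

Lemma atom_ofC u w : atom_of u w = atom_of w u.
Proof.
case: hR => _ [_ [_ [_ [hConv _]]]].
apply/eqP; rewrite -atom_ofP -[h _](congr1 h (imset_id [set _])) hConv inE /=.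
by rewrite atom_ofP.
Qed.

Lemma le_comp_atom_of x y u w :
  le_comp x y (atom_of u w) = [exists s, (atom_of u s == x) && (atom_of s w == y)].
Proof.
case: hR => _ [_ [_ [hComp _]]].
rewrite -mem_ra_comp1 -mem_rep hComp inE.
by apply: eq_existsb => s; rewrite !atom_ofP.
Qed.

Definition rep_adj (u w : U) : bool := atom_of u w \in [set At_b; At_c].

Lemma rep_nonnbrsE u w : (w \in nonnbrs rep_adj u) = (atom_of u w == At_a).
Proof.
rewrite in_nonnbrs /rep_adj eq_sym -atom_of_idE.
by case: (atom_of u w); rewrite !inE !eq_atomE.
Qed.

Lemma rep_common_nbrs_ge4 u w : w \in nonnbrs rep_adj u ->
  4 <= #|nbrs rep_adj u :&: nbrs rep_adj w|.
Proof.
rewrite rep_nonnbrsE => /eqP uwa.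
pose bc := [set At_b; At_c]; pose f s := (atom_of u s, atom_of s w).
have sub : setX bc bc \subset f @: (nbrs rep_adj u :&: nbrs rep_adj w).
  apply/subsetP => -[x y] /setXP [xbc ybc].
  have : le_comp x y (atom_of u w).
    by move: xbc ybc; rewrite uwa !inE; case: x; case: y; rewrite /le_comp !eq_atomE.
  rewrite le_comp_atom_of => /existsP [s /andP [/eqP usx /eqP swy]].
  apply/imsetP; exists s; last by rewrite /f usx swy.
  by rewrite inE !in_nbrs /rep_adj usx (atom_ofC w s) swy xbc ybc.
have := leq_trans (subset_leq_card sub) (leq_imset_card _ _).
by rewrite cardsX cards2 eq_atomE.
Qed.

Lemma rep_graph : graph_32_65 rep_adj.
Proof.
split.
- by move=> u w; rewrite /rep_adj atom_ofC.
- by move=> u; rewrite /rep_adj atom_of_refl !inE !eq_atomE.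
- move=> u s w; rewrite /rep_adj.
  have : le_comp (atom_of u s) (atom_of s w) (atom_of u w).
    by rewrite le_comp_atom_of; apply/existsP; exists s; rewrite !eqxx.
  by case: (atom_of u s) (atom_of s w) (atom_of u w) => [] [] [];
    rewrite /le_comp !inE !eq_atomE.
- exact: rep_common_nbrs_ge4.
- move=> u w; rewrite rep_nonnbrsE => /eqP uwa.
  have : le_comp At_a At_b (atom_of u w) by rewrite uwa /le_comp !eq_atomE.
  rewrite le_comp_atom_of => /existsP [s /andP [/eqP usa /eqP swb]].
  by exists s; rewrite !inE /rep_adj (atom_ofC w s) swb usa !inE !eq_atomE.
- move=> u w; rewrite /rep_adj => uw.
  have : le_comp At_a At_a (atom_of u w).
    by move: uw; case: (atom_of u w); rewrite /le_comp !inE !eq_atomE.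
  rewrite le_comp_atom_of => /existsP [s /andP [usa swa]].
  by exists s; rewrite inE !rep_nonnbrsE usa atom_ofC swa.
- move=> u.
  have : le_comp At_a At_a (atom_of u u).
    by rewrite atom_of_refl /le_comp !eq_atomE.
  rewrite le_comp_atom_of => /existsP [s /andP [usa _]].
  by exists s; rewrite rep_nonnbrsE.
Qed.

End Representation.

Theorem mainTheorem13 :
  forall n : nat, 20 <= n <= 25 -> ~ in_Spec n.
Proof.
move=> n /andP [n20 n25] [U [h [cardU hR]]].
have /card_gt0P [u0 _] : 0 < #|U| by rewrite cardU (leq_trans _ n20).
by have := graph_32_65_card_ge26 (rep_graph hR) u0; rewrite cardU; lia.
Qed.
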